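(* For every $A\in\mathrm{Sym}(\mathbb R^{n+1})\setminus\mathcal S$, we have $\det(I_n+\sqrt{-1}A)\neq 0$ and $$\mathrm{Re}\left(\frac{\det(I_n+\sqrt{-1}A)}{\det(I+\sqrt{-1}A^+)}\right)\ge 0,$$ i.e. $\Theta(A)-\theta(A^+)\in[-\pi/2,\pi/2]\subset S^1=\mathbb R/2\pi\mathbb Z$, where $\Theta(A)=\arg\det(I_n+\sqrt{-1}A)$ and $\theta(A^+)=\arg\det(I+\sqrt{-1}A^+)$ modulo $2\pi$.
   Context: $I_n=\mathrm{diag}(0,1,\dots,1)\in\mathrm{Sym}(\mathbb R^{n+1})$, $I$ is the $n\times n$ identity. For $A=[a_{ij}]_{i,j=0}^n$, $A^+=[a_{ij}]_{i,j=1}^n$. $\mathcal S=\{A: A=\mathrm{diag}(0,A^+)\}$. *)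

(* Complex numbers are modelled by an arbitrary
   numClosedFieldType C (e.g. algC); "real matrices" are matrices over C
   whose entries are all real (Num.real). *)
From HB Require Import structures.
From mathcomp Require Import all_boot all_order all_algebra.
Set Implicit Arguments. Unset Strict Implicit. Unset Printing Implicit Defensive.
Import Order.TTheory GRing.Theory Num.Theory.
Local Open Scope ring_scope.

Definition real_mx (C : numClosedFieldType) m n (A : 'M[C]_(m, n)) : Prop :=
  forall i j, A i j \is Num.real.

Definition sym_real (C : numClosedFieldType) n (A : 'M[C]_n) : Prop :=
  real_mx A /\ A^T = A.

Definition In_mx (C : numClosedFieldType) n : 'M[C]_(n.+1) :=
  \matrix_(i, j) ((i == j) && (i != ord0))%:R.

Definition plus_mx (C : numClosedFieldType) n (A : 'M[C]_(n.+1)) : 'M[C]_n :=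
  \matrix_(i, j) A (lift ord0 i) (lift ord0 j).

Definition in_S (C : numClosedFieldType) n (A : 'M[C]_(n.+1)) : Prop :=
  A = \matrix_(i, j) (if (i == ord0) || (j == ord0) then 0 else A i j).

(* Write A = [[a, b], [b^T, P]] with a real, b a real row and P = A^+.  The
   matrix M = I + iP is invertible since Re(x^* (I + iP) x) = |x|^2 for real
   symmetric P.  Expanding along the Schur complement of M gives
   det(I_n + iA) = (ia + x b^T) det M with x = b M^-1, and, since x M = b,
   Re(x b^T) = Re(x^* (I + iP) x) = |x|^2 >= 0.  If the ratio vanished, then
   x = 0, hence b = 0 and a = 0, i.e. A would lie in S. *)
From HB Require Import structures.
From mathcomp Require Import all_boot all_order all_algebra.
Set Implicit Arguments. Unset Strict Implicit. Unset Printing Implicit Defensive.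
Import Order.TTheory GRing.Theory Num.Theory.
Local Open Scope ring_scope.

Lemma det_block_schur (R : comUnitRingType) n (a : 'M[R]_1) (u : 'M[R]_(1, n))
    (v : 'M[R]_(n, 1)) (M : 'M[R]_n) : M \in unitmx ->
  \det (block_mx a u v M) = \det (a - u *m invmx M *m v) * \det M.
Proof.
move=> uM.
have -> : block_mx a u v M = block_mx 1%:M (u *m invmx M) 0 1%:M *m
     block_mx (a - u *m invmx M *m v) 0 v M.
  rewrite mulmx_block ?mul1mx ?mul0mx ?mulmx0 ?add0r ?addr0.
  by rewrite -[u *m invmx M *m M]mulmxA mulVmx // mulmx1 subrK.
by rewrite det_mulmx det_ublock det_lblock !det1 !mul1r.
Qed.

Section HermitianForm.

Variables (C : numClosedFieldType) (n : nat).
Implicit Types (x : 'rV[C]_n) (B : 'M[C]_n).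

Definition sqnorm x : C := \sum_j x 0 j * (x 0 j)^*.

Lemma sqnorm_ge0 x : 0 <= sqnorm x.
Proof. by apply: sumr_ge0 => j _; exact: mul_conjC_ge0. Qed.

Lemma sqnorm_eq0 x : sqnorm x = 0 -> x = 0.
Proof.
move=> /psumr_eq0P x0; apply/rowP => j; apply/eqP.
by rewrite mxE -mul_conjC_eq0 x0 // => k _; exact: mul_conjC_ge0.
Qed.

Lemma herm_form_real x B : real_mx B -> B^T = B ->
  \sum_j (x 0 j)^* * (x *m B) 0 j \is Num.real.
Proof.
move=> rB sB; apply/CrealP; rewrite rmorph_sum /=.
under eq_bigr => j _ do rewrite rmorphM /= conjCK !mxE rmorph_sum mulr_sumr.
under [RHS]eq_bigr => j _ do rewrite !mxE mulr_sumr.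
rewrite exchange_big /=; apply: eq_bigr => k _; apply: eq_bigr => j _.
rewrite rmorphM /= (CrealP (rB k j)).
have -> : B j k = B k j by rewrite -[in LHS]sB mxE.
by rewrite mulrCA mulrA.
Qed.

Lemma Re_herm_form_1_iB x B : real_mx B -> B^T = B ->
  'Re (\sum_j (x 0 j)^* * (x *m (1%:M + 'i *: B)) 0 j) = sqnorm x.
Proof.
move=> rB sB.
have -> : \sum_j (x 0 j)^* * (x *m (1%:M + 'i *: B)) 0 j =
    sqnorm x + 'i * \sum_j (x 0 j)^* * (x *m B) 0 j.
  rewrite mulr_sumr -big_split /=; apply: eq_bigr => j _.
  rewrite mulmxDr mul_mx_scalar -scalemxAr !mxE mulrDr mul1r mulrC.
  by rewrite [_ * (_ * _)]mulrCA.
by rewrite Re_rect ?herm_form_real // ger0_real ?sqnorm_ge0.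
Qed.

Lemma unitmx_1_iB B : real_mx B -> B^T = B -> 1%:M + 'i *: B \in unitmx.
Proof.
move=> rB sB; rewrite unitmxE unitfE; apply/det0P => -[x /eqP x_neq0 x0].
apply/x_neq0/sqnorm_eq0.
rewrite -(Re_herm_form_1_iB x rB sB) x0 big1 ?raddf0 // => j _.
by rewrite mxE mulr0.
Qed.

End HermitianForm.

Section SchurComplement.

Variables (C : numClosedFieldType) (n : nat) (A : 'M[C]_(n.+1)).
Hypotheses (rA : real_mx A) (sA : A^T = A).

Let A_sym i j : A j i = A i j.
Proof. by rewrite -[in LHS]sA mxE. Qed.

Let neq_lift0 (k : 'I_n) : (lift ord0 k == ord0) = false.
Proof. by apply/negbTE; rewrite eq_sym neq_lift. Qed.

Lemma plus_mx_real : real_mx (plus_mx A).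
Proof. by move=> i j; rewrite mxE. Qed.

Lemma plus_mx_sym : (plus_mx A)^T = plus_mx A.
Proof. by apply/matrixP => i j; rewrite !mxE A_sym. Qed.

Definition first_row_plus : 'rV[C]_n := \row_j A 0 (lift 0 j).

Local Notation b := first_row_plus.
Local Notation M := (1%:M + 'i *: plus_mx A).

Lemma unitmx_1_iplus : M \in unitmx.
Proof. exact: unitmx_1_iB plus_mx_real plus_mx_sym. Qed.

Lemma In_iA_block : In_mx C n + 'i *: A =
  block_mx ('i * A 0 0)%:M ('i *: b) ('i *: b^T) M :> 'M_(1 + n).
Proof.
apply/matrixP => i j.
have l0 : (ord0 : 'I_(n.+1)) = lshift n (ord0 : 'I_1) by apply/val_inj.
have lS (k : 'I_n) : lift ord0 k = rshift 1 k by apply/val_inj.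
case: (unliftP ord0 i) => [i'|] ->; case: (unliftP ord0 j) => [j'|] ->;
  rewrite ?[in RHS](lS i') ?[in RHS](lS j') ?[in RHS]l0.
- by rewrite block_mxEdr !mxE neq_lift0 andbT (inj_eq lift_inj).
- by rewrite block_mxEdl !mxE neq_lift0 /= mulr0n add0r A_sym.
- by rewrite block_mxEur !mxE eqxx andbF add0r.
- by rewrite block_mxEul !mxE eqxx andbF add0r mulr1n.
Qed.

Definition schur_complement : C := 'i * A 0 0 + (b *m invmx M *m b^T) 0 0.

Lemma det_In_iA : \det (In_mx C n + 'i *: A) = schur_complement * \det M.
Proof.
rewrite In_iA_block det_block_schur ?unitmx_1_iplus // det_mx11.
rewrite -!scalemxAl -scalemxAr !mxE eqxx mulr1n mulrA -expr2 sqrCi.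
by rewrite mulN1r opprK /schur_complement [in RHS]mxE.
Qed.

Lemma first_row_plus_invK : b *m invmx M *m M = b.
Proof. by rewrite -mulmxA mulVmx ?unitmx_1_iplus // mulmx1. Qed.

Lemma Re_schur_complement : 'Re schur_complement = sqnorm (b *m invmx M).
Proof.
set x := b *m invmx M.
rewrite raddfD /= ReMil (Creal_ImP _ (rA 0 0)) oppr0 add0r -Re_conj.
rewrite -(Re_herm_form_1_iB x plus_mx_real plus_mx_sym) first_row_plus_invK !mxE rmorph_sum /=.
by congr ('Re _); apply: eq_bigr => j _; rewrite !mxE rmorphM /= (CrealP (rA _ _)).
Qed.

Lemma in_S_first_row : (forall j, A 0 j = 0) -> in_S A.
Proof.
move=> A0; apply/matrixP => i j; rewrite mxE.
case: (unliftP ord0 i) => [i'|] ->; case: (unliftP ord0 j) => [j'|] ->.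
- by rewrite !neq_lift0.
- by rewrite eqxx orbT A_sym A0.
- by rewrite eqxx A0.
- by rewrite eqxx A0.
Qed.

Lemma schur_complement_eq0 : schur_complement = 0 -> in_S A.
Proof.
move=> r0; set x := b *m invmx M.
have x0 : x = 0 by apply: sqnorm_eq0; rewrite -Re_schur_complement r0 raddf0.
have b0 : b = 0.
  by rewrite -first_row_plus_invK -/x x0 mul0mx.
have a0 : A 0 0 = 0.
  move: r0; rewrite /schur_complement -/x x0 !mul0mx mxE addr0 => /eqP.
  by rewrite mulf_eq0 (negbTE (neq0Ci C)) => /eqP.
apply: in_S_first_row => j; case: (unliftP ord0 j) => [j'|] -> //.
by have := congr1 (fun m : 'rV[C]_n => m 0 j') b0; rewrite !mxE.
Qed.

End SchurComplement.

Theorem lemma3p4 (C : numClosedFieldType) (n : nat) (A : 'M[C]_(n.+1)) :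
  sym_real A -> ~ in_S A ->
  \det (In_mx C n + 'i *: A) != 0 /\
  0 <= 'Re (\det (In_mx C n + 'i *: A) / \det (1%:M + 'i *: plus_mx A)).
Proof.
move=> [rA sA] notS.
have dM : \det (1%:M + 'i *: plus_mx A) != 0.
  by rewrite -unitfE -unitmxE unitmx_1_iplus.
rewrite (det_In_iA rA sA) (mulfK dM) (Re_schur_complement rA sA) sqnorm_ge0.
split=> //; rewrite mulf_neq0 //.
by apply/eqP => /(schur_complement_eq0 rA sA); exact: notS.
Qed.
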